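(* Let $m\ge1$ and $m_0\in\{0,\dots,m\}$. Let $\mathbf p=(p_1,\dots,p_m)$ have joint distribution $P$ such that $p_1,\dots,p_{m_0}$ are mutually independent and each satisfies $P(p_i\le x)\le x$ for all $x\in[0,1]$ (the remaining $p$-values having arbitrary joint distribution, possibly dependent on the first ones). Let $\delta$ be a multiple testing procedure rejecting exactly the hypotheses $i$ with $p_i\le t^*(\mathbf p)$, where $t^*:[0,1]^m\to[0,1]$ is measurable and nonincreasing in each coordinate. Let $\phi:\mathbb N\to\mathbb R$ be nondecreasing, and set $R(P,\delta)=\mathbb E_{\mathbf p\sim P}[\phi(V_m(\delta(\mathbf p)))]$. Then $R(P,\delta)\le R(\mathrm{DU}(m,m_0),\delta)$.
   Context: $V_m(\delta(\mathbf p))=|\{1\le i\le m_0: p_i\le t^*(\mathbf p)\}|$ is the number of rejected true null hypotheses, hypotheses $1,\dots,m_0$ being the true nulls. $\mathrm{DU}(m,m_0)$ is the Dirac-uniform distribution: $p_1,\dots,p_{m_0}$ i.i.d. uniform on $(0,1)$ and $p_i=0$ almost surely for $m_0<i\le m$. (Example: $\phi(v)=\mathbf 1\{v\ge k\}$ gives the $k$-FWER.) *)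

From HB Require Import structures.
From mathcomp Require Import all_boot all_order all_algebra.
From mathcomp Require Import all_classical all_reals all_analysis.
Set Implicit Arguments. Unset Strict Implicit. Unset Printing Implicit Defensive.
Import Order.TTheory GRing.Theory Num.Theory.
Local Open Scope classical_set_scope.
Local Open Scope ring_scope.

(* p-value vectors are m-tuples of reals, with the product (Borel) sigma-algebra
   provided by MathComp-Analysis on [n.-tuple R]. *)

Definition cube {R : realType} (m : nat) : set (m.-tuple R) :=
  [set x | forall i : 'I_m, 0 <= tnth x i <= 1].
Arguments cube {R} m.

Definition first_coords_indep {R : realType} (m m0 : nat)
    (P : probability (m.-tuple R) R) : Prop :=
  forall (S : {set 'I_m}) (B : 'I_m -> set R),
    (forall i, measurable (B i)) ->
    (forall i, i \in S -> (i < m0)%N) ->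
    P [set x | forall i, i \in S -> B i (tnth x i)] =
    (\prod_(i in S) P [set x | B i (tnth x i)])%E.

(* Number of rejected true nulls (nulls are coordinates 0..m0-1) by the
   step procedure with threshold t: V(x) = #{ i < m0 : x_i <= t(x) }. *)
Definition Vrej {R : realType} (m m0 : nat) (t : m.-tuple R -> R)
    (x : m.-tuple R) : nat :=
  #|[set i : 'I_m | (i < m0)%N && (tnth x i <= t x)]|.

Definition risk {R : realType} (m m0 : nat) (phi : nat -> R)
    (t : m.-tuple R -> R) (P : probability (m.-tuple R) R) : \bar R :=
  (\int[P]_(x in cube m) (phi (Vrej m0 t x))%:E)%E.

(* Q is the Dirac-uniform distribution DU(m, m0): coordinates < m0 are
   i.i.d. uniform on (0,1), coordinates >= m0 are a.s. equal to 0.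
   These conditions determine Q uniquely. *)
Definition is_DU {R : realType} (m m0 : nat) (Q : probability (m.-tuple R) R)
  : Prop :=
  [/\ first_coords_indep m0 Q,
      (forall i : 'I_m, (i < m0)%N -> forall u : R, 0 <= u <= 1 ->
         Q [set x | tnth x i <= u] = u%:E) &
      (forall i : 'I_m, (m0 <= i)%N -> Q [set x | tnth x i = 0] = 1%E)].

From HB Require Import structures.
From mathcomp Require Import all_boot all_order all_algebra.
From mathcomp Require Import all_classical all_reals all_analysis.
From mathcomp Require Import measurable_realfun lra.
Import Order.TTheory GRing.Theory Num.Theory.
Local Open Scope classical_set_scope.
Local Open Scope ring_scope.
Set Implicit Arguments. Unset Strict Implicit. Unset Printing Implicit Defensive.

(* Lowering a non-null p-value can only raise the threshold t*, so V is
   dominated by G(p) := V(p_1, ..., p_m0, 0, ..., 0), with equality almost surely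
   under DU(m, m0).  G depends on the null p-values only and is nonincreasing in
   them, so every event {G > k} is a down-set of R^m0.  The null p-values are
   independent under both laws and each one is stochastically larger under P
   than a uniform variable (P(p_i <= u) <= u); splitting off one coordinate at a
   time with Fubini shows that every down-set is less likely under P than under
   DU.  Finally phi(G) = phi(0) + sum_k (phi(k+1) - phi(k)) 1{G > k} has
   nonnegative increments, hence E_P phi(G) <= E_DU phi(G). *)

Section down_closed_real.
Variable R : realType.

Definition down_closed (A : set R) := forall a b, A a -> b <= a -> A b.

Lemma down_closed_cases (A : set R) : down_closed A ->
  [\/ A = set0, A = setT |
      exists s, [set a | a < s] `<=` A /\ A `<=` [set a | a <= s]].
Proof.
move=> dA; have [[a Aa]|nA] := pselect (exists a, A a); last first.
  by apply: Or31; apply/seteqP; split => // a Aa; apply: nA; exists a.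
have [ubA|nubA] := pselect (has_ubound A); last first.
  apply: Or32; apply/seteqP; split => // b _.
  apply: contrapT => nAb; apply: nubA; exists b => c Ac.
  by rewrite leNgt; apply/negP => /ltW ba; exact: nAb (dA c b Ac ba).
have supA : has_sup A by split => //; exists a.
apply: Or33; exists (sup A); split => [b bs|b Ab]; last exact: sup_upper_bound.
have sb : 0 < sup A - b by rewrite subr_gt0.
have [c Ac bc] := sup_adherent sb supA.
by apply: (dA c) => //; apply: ltW; move: bc; rewrite subKr.
Qed.

End down_closed_real.

Section superuniform.
Context d (T : measurableType d) (R : realType).
Variables (P Q : probability T R) (f : T -> R).
Hypotheses (mf : measurable_fun setT f)
  (P_nonneg : P [set x | f x < 0] = 0%E)
  (P_superuniform : forall u, 0 <= u <= 1 -> (P [set x | (f x <= u)%R] <= u%:E)%E)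
  (Q_uniform : forall u, 0 <= u <= 1 -> Q [set x | f x <= u] = u%:E).

Let measurable_preimage (B : set R) : measurable B -> measurable [set x | B (f x)].
Proof. by move=> mB; rewrite -[X in measurable X]setTI; exact: mf. Qed.

Let measurable_le u : measurable [set x | f x <= u].
Proof. exact: (measurable_preimage (measurable_itv `]-oo, u])). Qed.

Let measurable_lt u : measurable [set x | f x < u].
Proof. exact: (measurable_preimage (measurable_itv `]-oo, u[)). Qed.

Lemma superuniform_le_uniform_lt s :
  (P [set x | (f x <= s)%R] <= Q [set x | (f x < s)%R])%E.
Proof.
have [s0|s0] := ltP s 0.
  rewrite (@subset_measure0 _ _ _ P _ [set x | f x < 0]) ?measure_ge0 //.
  by move=> x /= /le_lt_trans; apply.
have [s1|s1] := ltP 1 s.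
  apply: le_trans (probability_le1 _ (measurable_le s)) _.
  rewrite -Q_uniform ?ler01 ?lexx //.
  by apply: le_measure; rewrite ?inE // => x /= /le_lt_trans; apply.
apply: le_trans (P_superuniform _) _; first by rewrite s0 s1.
apply/lee_addgt0Pr => e e0; rewrite -leeBlDr // -EFinB.
have [es|se] := ltP e s; last by apply: le_trans (measure_ge0 _ _); rewrite lee_fin subr_le0.
rewrite -Q_uniform; last by apply/andP; split; lra.
by apply: le_measure; rewrite ?inE // => x /=; lra.
Qed.

Lemma superuniform_down_closed_le (A : set R) : measurable A -> down_closed A ->
  (P [set x | A (f x)] <= Q [set x | A (f x)])%E.
Proof.
move=> mA /down_closed_cases[->|->|[s [sA As]]].
- by rewrite -[X in P X]/set0 measure0 measure_ge0.
- by rewrite -[X in P X]/setT -[X in Q X]/setT !probability_setT.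
apply: (@le_trans _ _ (P [set x | (f x <= s)%R])).
  by apply: le_measure; rewrite ?inE //; [exact: measurable_preimage|move=> x /As].
apply: le_trans (superuniform_le_uniform_lt s) _.
by apply: le_measure; rewrite ?inE //; [exact: measurable_preimage|move=> x /sA].
Qed.

End superuniform.

Section product_measure_le.
Context d1 d2 (T1 : measurableType d1) (T2 : measurableType d2) (R : realType).

Lemma product_measure_le_sections (m1 m1' : probability T1 R)
    (m2 m2' : probability T2 R) (E : set (T1 * T2)) : measurable E ->
  (forall y, m1 (ysection E y) <= m1' (ysection E y))%E ->
  (forall x, m2 (xsection E x) <= m2' (xsection E x))%E ->
  ((m1 \x m2) E <= (m1' \x m2') E)%E.
Proof.
move=> mE le1 le2.
have product_measure12 (mu : probability T1 R) (nu : probability T2 R) :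
    (mu \x nu)%E E = (mu \x^ nu)%E E.
  by apply: product_measure_unique => // A B mA mB; exact: product_measure2E.
rewrite product_measure12; apply: (@le_trans _ _ ((m1' \x^ m2) E)%E).
  by apply: ge0_le_integral => //; [exact: measurable_fun_ysection..|move=> y _; exact: le1].
rewrite -product_measure12.
by apply: ge0_le_integral => //; [exact: measurable_fun_xsection..|move=> x _; exact: le2].
Qed.

End product_measure_le.

Section coordinate_independence.
Variable R : realType.

Definition cylinder n (B : 'I_n -> set R) : set (n.-tuple R) :=
  [set x | forall i, B i (tnth x i)].

Lemma measurable_cylinder n (B : 'I_n -> set R) :
  (forall i, measurable (B i)) -> measurable (cylinder B).
Proof.
move=> mB; rewrite (_ : cylinder B =
    \bigcap_(i in [set: 'I_n]) [set x : n.-tuple R | B i (tnth x i)]).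
  apply: fin_bigcap_measurable; first exact: finite_finset.
  by move=> i _; rewrite -[X in measurable X]setTI; exact: measurable_tnth.
by apply/seteqP; split => [x Bx i _|x Bx i]; exact: Bx.
Qed.

Definition cylinders n : set (set (n.-tuple R)) :=
  [set A | exists2 B : 'I_n -> set R, (forall i, measurable (B i)) & A = cylinder B].

Lemma measurable_tuple_cylinders n : measurable = <<s @cylinders n >>.
Proof.
apply/seteqP; split.
- rewrite {1}/measurable /=.
  apply: smallest_sub; first exact: smallest_sigma_algebra.
  move=> A; rewrite -bigcup_seq /= => -[i _ [Y mY <-]].
  apply: sub_sigma_algebra.
  exists (fun j => if j == i then Y else setT); first by move=> j; case: ifP.
  apply/seteqP; split => x /=; first by move=> [_ Yx] j; case: eqP => [->|].
  by move=> Bx; split => //; move: (Bx i); rewrite eqxx.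
- apply: smallest_sub; first exact: sigma_algebra_measurable.
  by move=> _ [B mB ->]; exact: measurable_cylinder.
Qed.

Lemma setI_closed_cylinders n : setI_closed (@cylinders n).
Proof.
move=> _ _ [B mB ->] [C mC ->].
exists (fun i => B i `&` C i); first by move=> i; exact: measurableI.
apply/seteqP; split => x /=; first by move=> [Bx Cx] i; split; [exact: Bx|exact: Cx].
by move=> BCx; split => i; have [] := BCx i.
Qed.

Definition coords_indep n (mu : probability (n.-tuple R) R) :=
  forall B : 'I_n -> set R, (forall i, measurable (B i)) ->
    mu (cylinder B) = (\prod_(i < n) mu [set x | B i (tnth x i)])%E.

Definition tuple_head n (x : n.+1.-tuple R) : R := thead x.
Definition tuple_behead n (x : n.+1.-tuple R) : n.-tuple R := [tuple of behead x].
Definition tuple_cons n (p : R * n.-tuple R) : n.+1.-tuple R := [tuple of p.1 :: p.2].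

Lemma measurable_tuple_head n : measurable_fun setT (@tuple_head n).
Proof. exact: measurable_tnth. Qed.

Lemma measurable_tuple_behead n : measurable_fun setT (@tuple_behead n).
Proof. exact: measurable_behead. Qed.

Lemma measurable_tuple_cons n : measurable_fun setT (@tuple_cons n).
Proof. exact: measurable_cons. Qed.

HB.instance Definition _ n :=
  isMeasurableFun.Build _ _ _ _ (@tuple_head n) (@measurable_tuple_head n).
HB.instance Definition _ n :=
  isMeasurableFun.Build _ _ _ _ (@tuple_behead n) (@measurable_tuple_behead n).
HB.instance Definition _ n :=
  isMeasurableFun.Build _ _ _ _ (@tuple_cons n) (@measurable_tuple_cons n).

Lemma tnth_tuple_behead n (x : n.+1.-tuple R) j :
  tnth (tuple_behead x) j = tnth x (lift ord0 j).
Proof. by rewrite [in RHS](tuple_eta x) tnthS. Qed.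

Lemma tnth_tuple_cons n (p : R * n.-tuple R) j :
  tnth (tuple_cons p) (lift ord0 j) = tnth p.2 j.
Proof. by rewrite /tuple_cons tnthS. Qed.

Lemma coords_indep_behead n (mu : probability (n.+1.-tuple R) R) :
  coords_indep mu -> coords_indep (distribution mu (@tuple_behead n)).
Proof.
move=> mu_indep B mB.
pose B' (i : 'I_n.+1) := if i == ord0 then setT
  else [set a | forall j, i = lift ord0 j -> B j a].
have B'E j : B' (lift ord0 j) = B j.
  rewrite /B' eq_sym (negbTE (neq_lift _ _)); apply/seteqP; split => a /=; first exact.
  by move=> Ba k /lift_inj <-.
have mB' i : measurable (B' i).
  by case: (unliftP ord0 i) => [j ->|->]; rewrite ?B'E /B' ?eqxx.
transitivity (mu (cylinder B')).
  rewrite /distribution /pushforward /=; congr (mu _).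
  apply/seteqP; split => x Bx i /=; last by rewrite tnth_tuple_behead -B'E; exact: Bx.
  case: (unliftP ord0 i) => [j ->|->]; last by rewrite /B' eqxx.
  by rewrite B'E -tnth_tuple_behead; exact: Bx.
rewrite mu_indep // big_ord_recl.
have -> : [set x : n.+1.-tuple R | B' ord0 (tnth x ord0)] = setT by rewrite /B' eqxx.
rewrite probability_setT mul1e; apply: eq_bigr => j _.
rewrite B'E /distribution /pushforward /=.
by congr (mu _); apply/seteqP; split => x /=; rewrite tnth_tuple_behead.
Qed.

Lemma coords_indep_product n (mu : probability (n.+1.-tuple R) R) :
  coords_indep mu -> forall D, measurable D ->
  mu D = (distribution mu (@tuple_head n) \x distribution mu (@tuple_behead n))%E
           (@tuple_cons n @^-1` D).
Proof.
move=> mu_indep D mD.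
pose nu := distribution
  (distribution mu (@tuple_head n) \x distribution mu (@tuple_behead n))%E (@tuple_cons n).
suff -> : mu D = nu D by [].
apply: (measure_unique (@cylinders n.+1) (fun=> setT)) => //.
- exact: measurable_tuple_cylinders.
- exact: setI_closed_cylinders.
- by move=> _; exists (fun=> setT) => //; apply/seteqP; split.
- by rewrite bigcup_const.
- move=> _ [B mB ->].
  transitivity (\prod_(i < n.+1) mu [set x | B i (tnth x i)])%E; first exact: mu_indep.
  rewrite /nu /= /pushforward; symmetry.
  transitivity ((distribution mu (@tuple_head n) \x distribution mu (@tuple_behead n))%E
      (B ord0 `*` cylinder (fun j => B (lift ord0 j)))).
    congr (_ _); apply/seteqP; split => -[a r] /=.
      move=> Bar; split; first exact: (Bar ord0).
      by move=> j; have := Bar (lift ord0 j); rewrite tnth_tuple_cons.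
    move=> [Ba Br] i; case: (unliftP ord0 i) => [j ->|->] //.
    by rewrite tnth_tuple_cons; exact: Br.
  rewrite product_measure1E //; last exact: measurable_cylinder.
  rewrite big_ord_recl; congr (_ * _)%E.
  etransitivity; first exact: (coords_indep_behead mu_indep (fun j => mB (lift ord0 j))).
  apply: eq_bigr => j _; rewrite /distribution /pushforward /=.
  by congr (mu _); apply/seteqP; split => x /=; rewrite tnth_tuple_behead.
- by move=> _; apply: le_lt_trans (probability_le1 _ _) (ltry _).
Qed.

Definition tuple_down_closed n (D : set (n.-tuple R)) :=
  forall x y, D x -> (forall i, tnth y i <= tnth x i) -> D y.

(* Every coordinate is stochastically larger under [mu] than under [nu]. *)
Definition down_marginals_le n (mu nu : probability (n.-tuple R) R) :=
  forall i (A : set R), measurable A -> down_closed A ->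
    (mu [set x | A (tnth x i)] <= nu [set x | A (tnth x i)])%E.

Lemma down_marginals_le_behead n (mu nu : probability (n.+1.-tuple R) R) :
  down_marginals_le mu nu ->
  down_marginals_le (distribution mu (@tuple_behead n)) (distribution nu (@tuple_behead n)).
Proof.
move=> le_mu_nu i A mA dA; rewrite /distribution /pushforward /=.
have := le_mu_nu (lift ord0 i) A mA dA.
by congr (_ <= _)%E; congr (_ _); apply/seteqP; split => x /=; rewrite tnth_tuple_behead.
Qed.

Lemma tuple_cons_le n (a b : R) (r s : n.-tuple R) : b <= a ->
  (forall i, tnth s i <= tnth r i) ->
  forall i, tnth (tuple_cons (b, s)) i <= tnth (tuple_cons (a, r)) i.
Proof.
move=> ba sr i; case: (unliftP ord0 i) => [j ->|->] //.
by rewrite !tnth_tuple_cons; exact: sr.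
Qed.

Lemma coords_indep_down_closed_le n (mu nu : probability (n.-tuple R) R) :
  coords_indep mu -> coords_indep nu -> down_marginals_le mu nu ->
  forall D, measurable D -> tuple_down_closed D -> (mu D <= nu D)%E.
Proof.
elim: n mu nu => [|n IH] mu nu mu_indep nu_indep le_mu_nu D mD dD.
  have D_any x y : D x -> D y by move=> Dx; apply: dD Dx _ => -[].
  have [[x Dx]|nD] := pselect (exists x, D x).
    rewrite (_ : D = setT) ?probability_setT //.
    by apply/seteqP; split => // y _; exact: D_any Dx.
  rewrite (_ : D = set0) ?measure0 //.
  by apply/seteqP; split => // y Dy; apply: nD; exists y.
rewrite (coords_indep_product mu_indep mD) (coords_indep_product nu_indep mD).
have mE : measurable (@tuple_cons n @^-1` D).
  by rewrite -[X in measurable X]setTI; exact: measurable_tuple_cons.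
apply: product_measure_le_sections => // [r|a]; rewrite /distribution /pushforward /=.
- apply: le_mu_nu; first exact: measurable_ysection.
  move=> a b; rewrite /ysection /= !inE => Dar ba.
  by apply: dD Dar _; exact: tuple_cons_le.
- apply: IH.
  + exact: coords_indep_behead.
  + exact: coords_indep_behead.
  + exact: down_marginals_le_behead.
  + exact: measurable_xsection.
  move=> r s; rewrite /xsection /= !inE => Dar sr.
  by apply: dD Dar _; exact: tuple_cons_le.
Qed.

End coordinate_independence.

Section nat_valued_integrals.
Context d (T : measurableType d) (R : realType).
Implicit Types (mu nu : probability T R) (h : T -> nat) (phi : nat -> R).

Lemma measurable_fun_sumn D I (r : seq I) (h : I -> T -> nat) :
  (forall i, measurable_fun D (h i)) ->
  measurable_fun D (fun x => \sum_(i <- r) h i x)%N.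
Proof.
move=> mh; elim: r => [|a r IH].
  by under eq_fun do rewrite big_nil; exact: measurable_cst.
by under eq_fun do rewrite big_cons; exact: measurable_fun_addn.
Qed.

Lemma integrable_bounded mu D (f : T -> R) (B : R) :
  measurable D -> measurable_fun D f -> (forall x, D x -> `|f x| <= B) ->
  mu.-integrable D (EFin \o f).
Proof.
move=> mD mf fB; apply: measurable_bounded_integrable => //.
  by apply: le_lt_trans (probability_le1 _ mD) _; exact: ltry.
exists B; split; first exact: num_real.
by move=> C BC x Dx; apply: le_trans (fB x Dx) _; exact: ltW.
Qed.

Lemma integrable_nat_comp mu D h phi M :
  measurable D -> measurable_fun D h -> (forall x, D x -> (h x <= M)%N) ->
  mu.-integrable D (fun x => (phi (h x))%:E).
Proof.
move=> mD mh hM.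
apply: (@integrable_bounded mu D (phi \o h) (\sum_(k < M.+1) `|phi k|)) => //.
  exact: measurableT_comp.
move=> x Dx; rewrite (bigD1 (Ordinal (hM x Dx : (h x < M.+1)%N))) //=.
by rewrite lerDl sumr_ge0.
Qed.

Lemma telescope_layers phi M n : (n <= M)%N ->
  phi n = phi 0%N + \sum_(k < M) (phi k.+1 - phi k) * (k < n)%N%:R.
Proof.
move=> nM.
rewrite -(big_mkord xpredT (fun k => (phi k.+1 - phi k) * (k < n)%N%:R)).
rewrite (@big_cat_nat _ _ _ n) //=.
rewrite [X in _ + (_ + X)]big1_seq ?addr0; last first.
  by move=> k /andP[_]; rewrite mem_index_iota => /andP[nk _]; rewrite ltnNge nk mulr0.
rewrite (eq_big_seq (fun k => phi k.+1 - phi k)); last first.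
  by move=> k; rewrite mem_index_iota => /andP[_ ->]; rewrite mulr1.
by rewrite telescope_sumr // addrC subrK.
Qed.

Lemma integral_nat_comp mu h phi M :
  measurable_fun setT h -> (forall x, (h x <= M)%N) ->
  (\int[mu]_x (phi (h x))%:E =
   (phi 0%N)%:E + \sum_(k < M) (phi k.+1 - phi k)%:E * mu [set x | (k < h x)%N])%E.
Proof.
move=> mh hM.
have mlayer k : measurable [set x | (k < h x)%N].
  by have := mh measurableT [set n | (k < n)%N] ltac:(done); rewrite setTI.
pose layer k x := (phi k.+1 - phi k) * \1_[set x | (k < h x)%N] x.
have int_layer k : mu.-integrable setT (EFin \o layer k).
  apply: (@integrable_bounded mu setT (layer k) `|phi k.+1 - phi k|) => //.
    by apply: measurable_funM; [exact: measurable_cst|exact: measurable_indic].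
  by move=> x _; rewrite normrM indicE; case: (_ \in _); rewrite ?normr1 ?normr0 ?mulr1 ?mulr0.
have phihE x : phi (h x) = phi 0%N + \sum_(k < M) layer k x.
  rewrite (telescope_layers phi (hM x)); congr (_ + _); apply: eq_bigr => k _.
  rewrite /layer indicE; case: (boolP (k < h x)%N) => hk; first by rewrite mem_set.
  by rewrite memNset //= (negbTE hk).
under eq_integral do rewrite phihE EFinD -sumEFin.
rewrite integralD //; last 2 first.
- exact: (@integrable_bounded mu setT (cst (phi 0%N)) `|phi 0%N|).
- by apply: integrable_sum => // k _; exact: int_layer.
rewrite integral_cst //; congr (_ + _)%E.
  by rewrite -[RHS]mule1; congr (_ * _)%E; exact: probability_setT.
rewrite integral_sum // => [|k]; last exact: int_layer.
apply: eq_bigr => k _; under eq_integral do rewrite /layer EFinM.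
by rewrite integralZl ?integral_indic ?setIT //; exact: integrable_indic.
Qed.

Lemma le_integral_nat_comp mu nu h phi M :
  measurable_fun setT h -> (forall x, (h x <= M)%N) ->
  {homo phi : a b / (a <= b)%N >-> a <= b} ->
  (forall k, mu [set x | (k < h x)%N] <= nu [set x | (k < h x)%N])%E ->
  (\int[mu]_x (phi (h x))%:E <= \int[nu]_x (phi (h x))%:E)%E.
Proof.
move=> mh hM phi_nd le_mu_nu; rewrite !(integral_nat_comp _ _ mh hM).
rewrite leeD2l // lee_sum // => k _.
by rewrite lee_wpmul2l // lee_fin subr_ge0; apply: phi_nd.
Qed.

Lemma integral_conull mu C (f : T -> \bar R) : measurable C -> mu (~` C) = 0%E ->
  mu.-integrable setT f -> (\int[mu]_(x in C) f x = \int[mu]_x f x)%E.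
Proof.
move=> mC C0 intf.
by rewrite (negligible_integral (measurableC mC) measurableT intf C0) setTD setCK.
Qed.

End nat_valued_integrals.

Lemma measurable_cube (R : realType) m : measurable (@cube R m).
Proof.
rewrite (_ : cube m = \bigcap_(i in [set: 'I_m])
    ((fun x : m.-tuple R => tnth x i) @^-1` `[0, 1])).
  apply: fin_bigcap_measurable; first exact: finite_finset.
  by move=> i _; rewrite -[X in measurable X]setTI; exact: measurable_tnth.
apply/seteqP; split => [x x01 i _|x x01 i]; first by rewrite /= in_itv; exact: x01.
by have := x01 i I; rewrite /= in_itv.
Qed.
Arguments measurable_cube {R m}.

Lemma card_setE (I : finType) (P : pred I) : #|[set i | P i]| = (\sum_i P i)%N.
Proof.
rewrite -sum1_card big_mkcond; apply: eq_bigr => i _.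
by case: (boolP (P i)) => Pi; [rewrite mem_set|rewrite memNset //= (negbTE Pi)].
Qed.

Lemma card_set_le (I : finType) (P Q : pred I) : (forall i, P i -> Q i) ->
  (#|[set i | P i]| <= #|[set i | Q i]|)%N.
Proof.
move=> PQ; rewrite !card_setE; apply: leq_sum => i _.
by case: (boolP (P i)) => // /PQ ->.
Qed.

Lemma Vrej_le_size (R : realType) m m0 (t : m.-tuple R -> R) x : (Vrej m0 t x <= m)%N.
Proof. by rewrite /Vrej (leq_trans (max_card _)) // card_ord. Qed.

Lemma measurable_Vrej (R : realType) m m0 D (t : m.-tuple R -> R) :
  measurable_fun D t -> measurable_fun D (Vrej m0 t).
Proof.
move=> mt; rewrite (_ : Vrej m0 t =
    fun x => \sum_(i < m) nat_of_bool ((i < m0)%N && (tnth x i <= t x)%R))%N; last first.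
  by apply/funext => x; rewrite /Vrej card_setE.
apply: measurable_fun_sumn => i; apply: measurableT_comp => //.
apply: measurable_and; first exact: measurable_cst.
by apply: measurable_fun_ler => //; apply: measurable_funTS; exact: measurable_tnth.
Qed.

Section clamp01.
Variable R : realType.

Definition clamp01 (a : R) : R := Num.min (Num.max a 0) 1.

Lemma clamp01_in a : 0 <= clamp01 a <= 1.
Proof. by rewrite le_min ler01 le_max lexx orbT ge_min lexx orbT. Qed.

Lemma clamp01_id a : 0 <= a <= 1 -> clamp01 a = a.
Proof. by move=> /andP[a0 a1]; rewrite /clamp01 (max_idPl a0); apply/min_idPl. Qed.

Lemma clamp01_le : {homo clamp01 : a b / a <= b}.
Proof. by move=> a b ab; rewrite /clamp01 le_min2 // le_max2. Qed.

Lemma measurable_clamp01 : measurable_fun setT clamp01.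
Proof.
apply: measurable_minr; last exact: measurable_cst.
by apply: measurable_maxr; [exact: measurable_id|exact: measurable_cst].
Qed.

End clamp01.

Section null_coordinates.
Variables (R : realType) (m m0 : nat) (hm0 : (m0 <= m)%N).

Definition proj_null (x : m.-tuple R) : m0.-tuple R :=
  [tuple tnth x (widen_ord hm0 i) | i < m0].

(* Clamping keeps the image in the cube, where t is antitone; coordinates
   j >= m0 get the default value [nth 0 y j = 0]. *)
Definition embed_null (y : m0.-tuple R) : m.-tuple R :=
  [tuple clamp01 (nth 0 y j) | j < m].

Lemma tnth_proj_null x i : tnth (proj_null x) i = tnth x (widen_ord hm0 i).
Proof. by rewrite tnth_mktuple. Qed.

Lemma tnth_embed_null_lt y (j : 'I_m) (hj : (j < m0)%N) :
  tnth (embed_null y) j = clamp01 (tnth y (Ordinal hj)).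
Proof. by rewrite tnth_mktuple (tnth_nth 0). Qed.

Lemma tnth_embed_null_ge y (j : 'I_m) : (m0 <= j)%N -> tnth (embed_null y) j = 0.
Proof.
by move=> hj; rewrite tnth_mktuple nth_default ?size_tuple // clamp01_id // lexx ler01.
Qed.

Lemma embed_null_cube y : cube m (embed_null y).
Proof. by move=> j; rewrite tnth_mktuple clamp01_in. Qed.

Lemma embed_null_le y y' : (forall i, tnth y' i <= tnth y i) ->
  forall j, tnth (embed_null y') j <= tnth (embed_null y) j.
Proof.
move=> y'y j; have [hj|hj] := ltnP j m0; last by rewrite !tnth_embed_null_ge.
by rewrite !tnth_embed_null_lt clamp01_le.
Qed.

Lemma embed_proj_null_lt x (j : 'I_m) : cube m x -> (j < m0)%N ->
  tnth (embed_null (proj_null x)) j = tnth x j.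
Proof.
move=> x01 hj; rewrite tnth_embed_null_lt tnth_proj_null clamp01_id; last exact: x01.
by congr tnth; apply: val_inj.
Qed.

Lemma embed_proj_null_le x : cube m x ->
  forall j, tnth (embed_null (proj_null x)) j <= tnth x j.
Proof.
move=> x01 j; have [hj|hj] := ltnP j m0; first by rewrite embed_proj_null_lt.
by rewrite tnth_embed_null_ge //; have /andP[] := x01 j.
Qed.

Lemma measurable_proj_null : measurable_fun setT proj_null.
Proof.
apply/measurable_fun_tnthP => i.
rewrite (_ : _ \o _ = (fun x : m.-tuple R => tnth x (widen_ord hm0 i))).
  exact: measurable_tnth.
by apply/funext => x /=; rewrite tnth_proj_null.
Qed.

Lemma measurable_embed_null : measurable_fun setT embed_null.
Proof.
apply/measurable_fun_tnthP => j; have [hj|hj] := ltnP j m0.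
  rewrite (_ : _ \o _ = @clamp01 R \o (fun y : m0.-tuple R => tnth y (Ordinal hj))).
    by apply: measurableT_comp; [exact: measurable_clamp01|exact: measurable_tnth].
  by apply/funext => y /=; rewrite tnth_embed_null_lt.
rewrite (_ : _ \o _ = cst 0); first exact: measurable_cst.
by apply/funext => y /=; rewrite tnth_embed_null_ge.
Qed.

Variable t : m.-tuple R -> R.
Hypothesis t_antitone_coord : forall (x y : m.-tuple R) (i : 'I_m),
  cube m x -> cube m y -> (forall j, j != i -> tnth x j = tnth y j) ->
  tnth x i <= tnth y i -> t y <= t x.

Lemma t_antitone x y : cube m x -> cube m y -> (forall i, tnth x i <= tnth y i) ->
  t y <= t x.
Proof.
move=> x01 y01 xy.
pose z k : m.-tuple R := [tuple if (j < k)%N then tnth y j else tnth x j | j < m].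
have z01 k : cube m (z k).
  by move=> j; rewrite tnth_mktuple; case: ifP => _; [exact: y01|exact: x01].
have -> : y = z m by apply: eq_from_tnth => j; rewrite tnth_mktuple ltn_ord.
suff tz k : (k <= m)%N -> t (z k) <= t x by exact: tz.
elim: k => [|k IH] km.
  by rewrite (_ : z 0%N = x) //; apply: eq_from_tnth => j; rewrite tnth_mktuple.
apply: le_trans (IH (ltnW km)); apply: (t_antitone_coord (i := Ordinal km)) => //.
  move=> j jk; rewrite !tnth_mktuple [in RHS]ltnS [in RHS]leq_eqVlt.
  by have /negbTE-> : (j : nat) != k by apply: contra jk => /eqP jk; apply/eqP/val_inj.
by rewrite !tnth_mktuple /= ltnn ltnSn; exact: xy.
Qed.

Lemma Vrej_le_embed_proj x : cube m x ->
  (Vrej m0 t x <= Vrej m0 t (embed_null (proj_null x)))%N.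
Proof.
move=> x01; apply: card_set_le => i /andP[hi xi]; rewrite hi embed_proj_null_lt //.
apply: le_trans xi _; apply: t_antitone => //; first exact: embed_null_cube.
exact: embed_proj_null_le.
Qed.

Lemma Vrej_embed_proj x : cube m x -> (forall j : 'I_m, (m0 <= j)%N -> tnth x j = 0) ->
  Vrej m0 t x = Vrej m0 t (embed_null (proj_null x)).
Proof.
move=> x01 x0; congr (Vrej m0 t _); apply: eq_from_tnth => j.
have [hj|hj] := ltnP j m0; first by rewrite embed_proj_null_lt.
by rewrite x0 // tnth_embed_null_ge.
Qed.

Lemma down_closed_Vrej_embed k :
  tuple_down_closed [set y : m0.-tuple R | (k < Vrej m0 t (embed_null y))%N].
Proof.
move=> y y' /= ky y'y; apply: leq_trans ky _.
apply: card_set_le => i /andP[-> yi] /=.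
apply: le_trans (embed_null_le y'y i) _; apply: le_trans yi _.
by apply: t_antitone; [exact: embed_null_cube..|exact: embed_null_le].
Qed.

Lemma measurable_Vrej_embed : measurable_fun (cube m) t ->
  measurable_fun setT (fun y => Vrej m0 t (embed_null y)).
Proof.
move=> mt; apply: (measurable_comp (F := cube m)) => //.
- exact: measurable_cube.
- by move=> _ [y _ <-]; exact: embed_null_cube.
- exact: measurable_Vrej.
- exact: measurable_embed_null.
Qed.

End null_coordinates.

Lemma probability_setC_eq0 d (T : measurableType d) (R : realType)
    (P : probability T R) (A : set T) :
  measurable A -> P A = 1%E -> P (~` A) = 0%E.
Proof. by move=> mA PA; apply: (etrans (probability_setC P mA)); rewrite PA subee. Qed.

HB.instance Definition _ (R : realType) m m0 (hm0 : (m0 <= m)%N) :=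
  isMeasurableFun.Build _ _ _ _ (@proj_null R m m0 hm0) (@measurable_proj_null R m m0 hm0).

Section null_coordinates_law.
Variables (R : realType) (m m0 : nat) (hm0 : (m0 <= m)%N).

Lemma coords_indep_proj_null (P : probability (m.-tuple R) R) :
  first_coords_indep m0 P -> coords_indep (distribution P (proj_null hm0)).
Proof.
move=> P_indep B mB.
have widen_inj : injective (widen_ord hm0) by move=> i j /(congr1 val) /= ij; apply: val_inj.
pose S : {set 'I_m} := (widen_ord hm0 @: [set: 'I_m0])%SET.
pose B' (j : 'I_m) := [set a : R | forall i : 'I_m0, widen_ord hm0 i = j -> B i a].
have B'E i : B' (widen_ord hm0 i) = B i.
  by apply/seteqP; split => a /=; [apply|move=> Ba k /widen_inj ->].
have mB' j : measurable (B' j).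
  have [[i <-]|nj] := pselect (exists i, widen_ord hm0 i = j); first by rewrite B'E.
  rewrite (_ : B' j = setT) //.
  by apply/seteqP; split => // a _ i ij; exfalso; apply: nj; exists i.
have S_null (j : 'I_m) : j \in S -> (j < m0)%N by case/imsetP => i _ ->; rewrite /= ltn_ord.
transitivity (P [set x | forall j, j \in S -> B' j (tnth x j)]).
  rewrite /distribution /pushforward /=; congr (P _); apply/seteqP; split => x /=.
    by move=> Bx j /imsetP[i _ ->]; rewrite B'E -tnth_proj_null; exact: Bx.
  move=> B'x i; rewrite tnth_proj_null -B'E; apply: B'x.
  by apply/imsetP; exists i.
rewrite P_indep // big_imset /=; last by move=> i j _ _; exact: widen_inj.
rewrite (eq_bigl xpredT); last by move=> i; rewrite inE.
apply: eq_bigr => i _; rewrite B'E /distribution /pushforward /=.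
by congr (P _); apply/seteqP; split => x /=; rewrite tnth_proj_null.
Qed.

Lemma down_marginals_le_proj_null (P Q : probability (m.-tuple R) R) :
  P (cube m) = 1%E ->
  (forall i : 'I_m, (i < m0)%N -> forall u : R, 0 <= u <= 1 ->
     (P [set x | (tnth x i <= u)%R] <= u%:E)%E) ->
  (forall i : 'I_m, (i < m0)%N -> forall u : R, 0 <= u <= 1 ->
     Q [set x | tnth x i <= u] = u%:E) ->
  down_marginals_le (distribution P (proj_null hm0)) (distribution Q (proj_null hm0)).
Proof.
move=> P01 P_sup Q_unif i A mA dA.
have wi : (widen_ord hm0 i < m0)%N by rewrite /= ltn_ord.
have P_cube := probability_setC_eq0 measurable_cube P01.
have P_nonneg : P [set x | tnth x (widen_ord hm0 i) < 0] = 0%E.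
  apply: (@subset_measure0 _ _ _ P _ (~` cube m)) => //.
  - rewrite (_ : [set x | _] = (fun x => tnth x (widen_ord hm0 i)) @^-1` `]-oo, 0[).
      by rewrite -[X in measurable X]setTI; exact: measurable_tnth.
    by apply/seteqP; split => x; rewrite /= in_itv.
  - by apply: measurableC; exact: measurable_cube.
  - by move=> x /= x0 x01; have := x01 (widen_ord hm0 i); rewrite leNgt x0.
have := superuniform_down_closed_le (measurable_tnth _) P_nonneg
  (P_sup _ wi) (Q_unif _ wi) mA dA.
suff -> : [set x | A (tnth x (widen_ord hm0 i))] =
    proj_null hm0 @^-1` [set y | A (tnth y i)] by [].
by apply/seteqP; split => x /=; rewrite tnth_proj_null.
Qed.

End null_coordinates_law.

Section risk_bounds.
Variables (R : realType) (m m0 : nat) (hm0 : (m0 <= m)%N) (t : m.-tuple R -> R).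
Variable phi : nat -> R.
Hypothesis t_measurable : measurable_fun (cube m) t.

Let V_embed (x : m.-tuple R) := Vrej m0 t (embed_null m (proj_null hm0 x)).

Let measurable_V_embed : measurable_fun setT V_embed.
Proof.
exact: measurableT_comp (measurable_Vrej_embed t_measurable) (measurable_proj_null hm0).
Qed.

Let measurable_phi_V_embed D : measurable_fun D (fun x => (phi (V_embed x))%:E).
Proof. by apply/measurable_EFinP; apply: measurable_funTS; exact: measurableT_comp. Qed.

Let integrable_phi_V_embed (mu : probability (m.-tuple R) R) D : measurable D ->
  mu.-integrable D (fun x => (phi (V_embed x))%:E).
Proof.
move=> mD; apply: (integrable_nat_comp mu phi mD); first exact: measurable_funTS.
by move=> x _; exact: Vrej_le_size.
Qed.

Lemma risk_le_embed_proj (P : probability (m.-tuple R) R) :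
  P (cube m) = 1%E ->
  (forall (x y : m.-tuple R) (i : 'I_m), cube m x -> cube m y ->
     (forall j, j != i -> tnth x j = tnth y j) -> tnth x i <= tnth y i -> t y <= t x) ->
  {homo phi : a b / (a <= b)%N >-> a <= b} ->
  (risk m0 phi t P <= \int[P]_x (phi (V_embed x))%:E)%E.
Proof.
move=> P01 t_antitone_coord phi_nd.
have P_cube := probability_setC_eq0 measurable_cube P01.
rewrite -(integral_conull measurable_cube P_cube (integrable_phi_V_embed _ measurableT)).
apply: le_integral.
- exact: measurable_cube.
- apply: (integrable_nat_comp P phi measurable_cube (measurable_Vrej m0 t_measurable)).
  by move=> x _; exact: Vrej_le_size.
- exact: integrable_phi_V_embed measurable_cube.
- move=> x /set_mem x01; rewrite lee_fin; apply: phi_nd.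
  exact: Vrej_le_embed_proj.
Qed.

Variable Q : probability (m.-tuple R) R.
Hypothesis Q_DU : is_DU m0 Q.

Lemma is_DU_ae_support :
  {ae Q, forall x, cube m x /\ forall j : 'I_m, (m0 <= j)%N -> tnth x j = 0}.
Proof.
have [_ Q_unif Q_zero] := Q_DU.
suff : \forall x \ae Q, forall j : 'I_m, 0 <= tnth x j <= 1 /\ ((m0 <= j)%N -> tnth x j = 0).
  by apply: filterS => x xj; split => j; have [] := xj j.
apply: filter_forall => j.
have measurable_coord (B : set R) : measurable B ->
    measurable [set x : m.-tuple R | B (tnth x j)].
  by move=> mB; rewrite -[X in measurable X]setTI; exact: measurable_tnth.
have measurable_le u : measurable [set x : m.-tuple R | tnth x j <= u].
  have := measurable_coord _ (measurable_itv `]-oo, u]).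
  by congr measurable; apply/seteqP; split => x; rewrite /= in_itv.
have [jm0|m0j] := ltnP j m0.
- have Q_le0 : Q [set x | tnth x j <= 0] = 0%E by rewrite Q_unif ?lexx ?ler01.
  have Q_le1 : Q (~` [set x | tnth x j <= 1]) = 0%E.
    by apply: probability_setC_eq0 (measurable_le 1) _; rewrite Q_unif ?lexx ?ler01.
  exists ([set x | tnth x j <= 0] `|` ~` [set x | tnth x j <= 1]); split.
  + exact: measurableU (measurable_le 0) (measurableC (measurable_le 1)).
  + by apply: null_set_setU => //; exact: measurableC.
  + move=> x /= x_out; apply: contrapT => /not_orP[/negP x_pos /contrapT x_le1].
    by apply: x_out; split => //; rewrite -ltNge in x_pos; rewrite (ltW x_pos) x_le1.
- exists (~` [set x | tnth x j = 0]); split.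
  + exact: measurableC (measurable_coord _ (measurable_set1 0)).
  + exact: probability_setC_eq0 (measurable_coord _ (measurable_set1 0)) (Q_zero _ m0j).
  + move=> x /= x_out; apply: contrapT => /contrapT x0.
    by apply: x_out; rewrite x0 lexx ler01.
Qed.

Lemma is_DU_cube : Q (~` cube m) = 0%E.
Proof.
have [N [mN N0 sN]] := is_DU_ae_support.
apply: (subset_measure0 (measurableC measurable_cube) mN) => // x x_out.
by apply: sN => -[/x_out].
Qed.

Lemma risk_DU : (risk m0 phi t Q = \int[Q]_x (phi (V_embed x))%:E)%E.
Proof.
rewrite -(integral_conull measurable_cube is_DU_cube (integrable_phi_V_embed _ measurableT)).
apply: ae_eq_integral.
- exact: measurable_cube.
- by apply/measurable_EFinP; exact: measurableT_comp (measurable_Vrej m0 t_measurable).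
- exact: measurable_phi_V_embed.
- apply: filterS is_DU_ae_support => x [x01 x0] _.
  by rewrite /V_embed -Vrej_embed_proj.
Qed.

End risk_bounds.

Unset Implicit Arguments.

Theorem lemmaC1 (R : realType) (m m0 : nat) (hm : (1 <= m)%N) (hm0 : (m0 <= m)%N)
    (P : probability (m.-tuple R) R)
    (hPsupp : P (cube m) = 1%E)
    (hPind : first_coords_indep m0 P)
    (hPsup : forall i : 'I_m, (i < m0)%N -> forall u : R, 0 <= u <= 1 ->
               (P [set x : m.-tuple R | (tnth x i <= u)%R] <= u%:E)%E)
    (t : m.-tuple R -> R)
    (ht_meas : measurable_fun (cube m) t)
    (ht_range : forall x, cube m x -> 0 <= t x <= 1)
    (ht_noninc : forall (x y : m.-tuple R) (i : 'I_m), cube m x -> cube m y ->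
        (forall j, j != i -> tnth x j = tnth y j) ->
        tnth x i <= tnth y i -> t y <= t x)
    (phi : nat -> R) (hphi : {homo phi : a b / (a <= b)%N >-> a <= b})
    (Q : probability (m.-tuple R) R) (hQ : is_DU m0 Q) :
  (risk m0 phi t P <= risk m0 phi t Q)%E.
Proof.
rewrite (risk_DU hm0 phi ht_meas hQ).
apply: le_trans (risk_le_embed_proj hm0 ht_meas hPsupp ht_noninc hphi) _.
have mG := measurableT_comp (measurable_Vrej_embed ht_meas) (measurable_proj_null hm0).
apply: (le_integral_nat_comp mG (fun x => Vrej_le_size _ _ _) hphi) => k.
have [Q_indep Q_unif _] := hQ.
pose D := [set y : m0.-tuple R | (k < Vrej m0 t (embed_null m y))%N].
have mD : measurable D.
  rewrite -[D]setTI.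
  exact: (measurable_Vrej_embed ht_meas measurableT (Y := [set n | (k < n)%N])).
(* [P [set x | k < G x]] is [distribution P (proj_null hm0) D] by conversion. *)
exact: (coords_indep_down_closed_le (coords_indep_proj_null hm0 hPind)
  (coords_indep_proj_null hm0 Q_indep) (down_marginals_le_proj_null hm0 hPsupp hPsup Q_unif)
  mD (down_closed_Vrej_embed ht_noninc (k := k))).
Qed.
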